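(* Let $Q$ be an admissible orientation of $\tilde A_n$ and let $I$ be a non-zero linearized semigroup ideal of $\Bbbk Q$. Then $I$ is indecomposable (as an ideal, i.e. it is not a direct sum of two non-zero ideals) if and only if the graph $\Gamma_I$ is connected.
   Context: $\Bbbk$ is an algebraically closed field. An admissible orientation of $\tilde A_n$ is a finite quiver $Q$ with $n$ vertices whose underlying undirected graph is a cycle, having no oriented cycle and at least one source; let $k\ge1$ be the number of sources (= number of sinks). Paths include trivial paths $\varepsilon_x$; products of paths in $\Bbbk Q$ are concatenations when defined and $0$ otherwise. $\omega\le_J\upsilon$ means $\upsilon=\alpha\omega\beta$ for paths $\alpha,\beta$; maximal paths are the $\le_J$-maximal paths (they are the $2k$ paths from a source to an adjacent sink). A linearized semigroup ideal is an ideal spanned by a set $X$ of paths such that $\alpha\omega\beta\in X$ whenever $\omega\in X$ and $\alpha\omega\beta$ is a defined path. The graph $\Gamma$ has the maximal paths as vertices and the sources and sinks of $Q$ as edges, the edge $x$ joining the two maximal paths having $x$ as an endpoint. For a linearized semigroup ideal $I$, $\Gamma_I$ is the subgraph with vertex set the maximal paths lying in $I$ and edge set the sources/sinks $x$ with $\varepsilon_x\in I$. *)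

From mathcomp Require Import all_boot all_algebra.
Set Implicit Arguments. Unset Strict Implicit. Unset Printing Implicit Defensive.
Import GRing.Theory.
Local Open Scope ring_scope.

(* The quiver Q(n, o): vertices 'I_n, arranged cyclically; for each i : 'I_n
   there is one arrow (also named i) joining vertex i and vertex i+1 (mod n);
   it points i -> i+1 if o i = true, and i+1 -> i otherwise.  Every finite
   quiver with n vertices whose underlying graph is a cycle is of this form. *)
Section PathAlgebra.
Variables (n : nat) (o : 'I_n -> bool).

Definition arr_src (a : 'I_n) : 'I_n := if o a then a else ordS a.
Definition arr_tgt (a : 'I_n) : 'I_n := if o a then ordS a else a.

Definition pcode : Type := ('I_n * seq 'I_n)%type.

Fixpoint is_walk (x : 'I_n) (s : seq 'I_n) : bool :=
  if s is a :: s' then (arr_src a == x) && is_walk (arr_tgt a) s' else true.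

Fixpoint walk_end (x : 'I_n) (s : seq 'I_n) : 'I_n :=
  if s is a :: s' then walk_end (arr_tgt a) s' else x.

Definition is_path (p : pcode) : bool := is_walk p.1 p.2.
Definition psrc (p : pcode) : 'I_n := p.1.
Definition ptgt (p : pcode) : 'I_n := walk_end p.1 p.2.
Definition triv (x : 'I_n) : pcode := (x, [::]).

Definition pcat (p q : pcode) : option pcode :=
  if ptgt p == psrc q then Some (p.1, p.2 ++ q.2) else None.

Definition has_oriented_cycle : Prop :=
  exists p : pcode, [/\ is_path p, p.2 != [::] & ptgt p = psrc p].

Definition is_source (x : 'I_n) : bool := [forall a : 'I_n, arr_tgt a != x].
Definition is_sink (x : 'I_n) : bool := [forall a : 'I_n, arr_src a != x].

Definition admissible : Prop :=
  ~ has_oriented_cycle /\ exists x, is_source x.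

Definition leJ (w u : pcode) : Prop :=
  exists a b : pcode, exists m : pcode,
    [/\ is_path a, is_path b, pcat a w = Some m & pcat m b = Some u].

Definition maximal_path (u : pcode) : Prop :=
  is_path u /\ forall z, is_path z -> leJ u z -> leJ z u.

Variable F : fieldType.

(* The path algebra kQ: F-valued functions on path codes supported on valid
   paths (the coefficient of each path); since Q is acyclic there are finitely
   many paths, so this is the F-span of the paths. *)
Definition in_kQ (f : pcode -> F) : Prop := forall p, f p != 0 -> is_path p.

Definition zerof : pcode -> F := fun _ => 0.
Definition addf (f g : pcode -> F) : pcode -> F := fun p => f p + g p.
Definition scalef (c : F) (f : pcode -> F) : pcode -> F := fun p => c * f p.

Definition mulf (f g : pcode -> F) : pcode -> F :=
  fun p => \sum_(i < (size p.2).+1)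
             f (p.1, take i p.2) * g (walk_end p.1 (take i p.2), drop i p.2).

Definition basis_el (p : pcode) : pcode -> F := fun q => (p == q)%:R.

Definition is_ideal (I : (pcode -> F) -> Prop) : Prop :=
  [/\ forall f, I f -> in_kQ f,
      I zerof,
      forall f g, I f -> I g -> I (addf f g),
      forall c f, I f -> I (scalef c f)
    & forall f g, I f -> in_kQ g -> I (mulf g f) /\ I (mulf f g)].

Definition nonzero_set (I : (pcode -> F) -> Prop) : Prop :=
  exists f, I f /\ f <> zerof.

Definition in_span (X : pcode -> Prop) (f : pcode -> F) : Prop :=
  exists (s : seq pcode) (c : pcode -> F),
    (forall p, p \in s -> X p) /\
    f = fun q => \sum_(p <- s) c p * (p == q)%:R.

Definition lin_sg_ideal (I : (pcode -> F) -> Prop) : Prop :=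
  exists X : pcode -> Prop,
    [/\ forall p, X p -> is_path p,
        forall w a b m u, X w -> is_path a -> is_path b ->
          pcat a w = Some m -> pcat m b = Some u -> X u
      & forall f, I f <-> in_span X f].

Definition ideal_decomposable (I : (pcode -> F) -> Prop) : Prop :=
  exists J K : (pcode -> F) -> Prop,
    [/\ is_ideal J /\ is_ideal K, nonzero_set J, nonzero_set K,
        (forall f, I f <-> exists j k, J j /\ K k /\ f = addf j k)
      & forall f, J f -> K f -> f = zerof].

Definition ideal_indecomposable I : Prop := ~ ideal_decomposable I.

Definition is_endpoint (x : 'I_n) (p : pcode) : Prop := psrc p = x \/ ptgt p = x.

Definition gamma_vertex (I : (pcode -> F) -> Prop) (u : pcode) : Prop :=
  maximal_path u /\ I (basis_el u).

Definition gamma_adj (I : (pcode -> F) -> Prop) (u v : pcode) : Prop :=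
  [/\ gamma_vertex I u, gamma_vertex I v, u <> v &
      exists x, [/\ is_source x || is_sink x, I (basis_el (triv x)),
                    is_endpoint x u & is_endpoint x v]].

Inductive gamma_conn (I : (pcode -> F) -> Prop) : pcode -> pcode -> Prop :=
  | gc_refl u : gamma_conn I u u
  | gc_step u v w : gamma_adj I u v -> gamma_conn I v w -> gamma_conn I u w.

Definition gamma_connected (I : (pcode -> F) -> Prop) : Prop :=
  forall u v, gamma_vertex I u -> gamma_vertex I v -> gamma_conn I u v.

End PathAlgebra.

From mathcomp Require Import all_boot all_algebra.
From mathcomp Require Import zify.
From Stdlib Require Import Classical ClassicalEpsilon FunctionalExtensionality.
Set Implicit Arguments. Unset Strict Implicit. Unset Printing Implicit Defensive.

(* In an acyclic orientation of a cycle, a vertex that is neither a source nor a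
   sink has exactly one incoming and one outgoing arrow.  Hence every arrow lies on
   exactly one maximal path, and two distinct maximal paths can only share a
   trivial path eps_x at a common endpoint x.  A linearized semigroup ideal I is
   the space of elements supported on an up-closed set X of paths.

   If Gamma_I is disconnected, take the paths of X lying below a vertex of one
   component: two maximal paths above a common path of X are joined by an edge,
   so this set and its complement in X are both up-closed, and they split I.

   Conversely let I = J + K.  Cutting an element by the idempotents at the
   endpoints of u shows that a path u of X that is the only path of X between its
   endpoints (e.g. a trivial path eps_x) lies in J or in K.  An edge eps_x then
   puts the two maximal paths it joins into its own summand.  A vertex of Gamma_I
   without edges is, by connectedness, the only vertex, hence the only path of X
   between its endpoints; so some vertex lies in J or K, and then all do, say
   in J.  Finally, if k in K has k w <> 0 and a w b is maximal, then a k b lies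
   in K, is nonzero at a w b, and is a combination of vertices, hence lies in J:
   a contradiction. *)

Section QuiverPaths.
Variables (n : nat) (o : 'I_n -> bool).

Lemma is_walk_cat x s1 s2 :
  is_walk o x (s1 ++ s2) = is_walk o x s1 && is_walk o (walk_end o x s1) s2.
Proof. by elim: s1 x => [|a s1 IH] x //=; rewrite IH andbA. Qed.

Lemma walk_end_cat x s1 s2 :
  walk_end o x (s1 ++ s2) = walk_end o (walk_end o x s1) s2.
Proof. by elim: s1 x => [|a s1 IH] x //=. Qed.

Lemma is_walk_rcons x s e :
  is_walk o x (rcons s e) = is_walk o x s && (arr_src o e == walk_end o x s).
Proof. by rewrite -cats1 is_walk_cat /= andbT. Qed.

Lemma walk_end_rcons x s e : walk_end o x (rcons s e) = arr_tgt o e.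
Proof. by rewrite -cats1 walk_end_cat. Qed.

Lemma pcatP a b m :
  pcat o a b = Some m <-> ptgt o a = psrc b /\ m = (a.1, a.2 ++ b.2).
Proof.
rewrite /pcat; case: eqP => [->|ne]; first by split=> [[<-]|[_ ->]].
by split=> // -[].
Qed.

Lemma ptgt_cat a b : ptgt o a = psrc b -> ptgt o (a.1, a.2 ++ b.2) = ptgt o b.
Proof. by rewrite /ptgt /psrc /= walk_end_cat => ->. Qed.

Lemma is_path_cat a b : is_path o a -> is_path o b -> ptgt o a = psrc b ->
  is_path o (a.1, a.2 ++ b.2).
Proof. by rewrite /is_path /= is_walk_cat /ptgt => -> + ->. Qed.

Lemma leJP w u : leJ o w u <->
  exists a b, [/\ is_path o a, is_path o b, ptgt o a = psrc w,
                  ptgt o w = psrc b & u = (a.1, a.2 ++ w.2 ++ b.2)].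
Proof.
split=> [[a [b [m [pa pb /pcatP[e1 ->] /pcatP[e2 ->]]]]]|[a [b [pa pb e1 e2 ->]]]].
  by exists a, b; split; rewrite // -?catA -?e2 ?ptgt_cat.
exists a, b, (a.1, a.2 ++ w.2); split=> //; apply/pcatP; split=> //.
- by rewrite ptgt_cat.
- by rewrite /= catA.
Qed.

Lemma ptgt_cat3 a w b : ptgt o a = psrc w -> ptgt o w = psrc b ->
  ptgt o (a.1, a.2 ++ w.2 ++ b.2) = ptgt o b.
Proof. by rewrite /ptgt /= !walk_end_cat -/(ptgt o a) => -> ->. Qed.

Definition upward_closed (P : pcode n -> Prop) : Prop :=
  forall p z, P p -> leJ o p z -> P z.

Lemma leJ_refl w : leJ o w w.
Proof.
by apply/leJP; exists (triv w.1), (triv (ptgt o w)); split; rewrite //= cats0 -surjective_pairing.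
Qed.

Lemma leJ_trans w1 w2 w3 : leJ o w1 w2 -> leJ o w2 w3 -> leJ o w1 w3.
Proof.
case/leJP=> a1 [b1 [pa1 pb1 ea1 eb1 ->]] /leJP [a2 [b2 [pa2 pb2 ea2 eb2 ->]]].
apply/leJP; exists (a2.1, a2.2 ++ a1.2), (b1.1, b1.2 ++ b2.2); split.
- exact: is_path_cat.
- apply: is_path_cat => //; rewrite -eb2 /ptgt /= !walk_end_cat.
  by rewrite -/(ptgt o a1) ea1 -/(ptgt o w1) eb1.
- by rewrite ptgt_cat.
- by [].
- by rewrite /= !catA.
Qed.

Lemma leJ_size w u : leJ o w u -> size w.2 <= size u.2.
Proof. by case/leJP=> a [b [_ _ _ _ ->]]; rewrite /= !size_cat; lia. Qed.

Lemma leJ_size_eq w u : leJ o w u -> size u.2 <= size w.2 -> u = w.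
Proof.
case/leJP=> -[x l] [[y r] [_ _ /= ea _ ->]]; rewrite /= !size_cat => le.
have /size0nil l0 : size l = 0 by lia.
have /size0nil r0 : size r = 0 by lia.
by move: ea; rewrite l0 r0 /ptgt /= cats0 => ->; case: w {le}.
Qed.

Lemma maximal_path_source u : maximal_path o u -> is_source o (psrc u).
Proof.
case=> pu umax; apply/forallP => c; apply/negP => /eqP e.
have pcu : is_path o (arr_src o c, c :: u.2) by rewrite /is_path /= eqxx e.
have /(umax _ pcu)/leJ_size : leJ o u (arr_src o c, c :: u.2).
  by apply/leJP; exists (arr_src o c, [:: c]), (triv (ptgt o u));
     split; rewrite //= ?cats0 /is_path /= ?eqxx.
by rewrite /= ltnn.
Qed.

Lemma maximal_path_sink u : maximal_path o u -> is_sink o (ptgt o u).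
Proof.
case=> pu umax; apply/forallP => c; apply/negP => /eqP e.
have puc : is_path o (u.1, rcons u.2 c).
  by rewrite /is_path /= is_walk_rcons -/(is_path o u) pu e /=.
have /(umax _ puc)/leJ_size : leJ o u (u.1, rcons u.2 c).
  by apply/leJP; exists (triv u.1), (ptgt o u, [:: c]);
     split; rewrite //= ?cats1 /is_path /= ?e ?eqxx.
by rewrite /= size_rcons ltnn.
Qed.

Lemma maximal_path_same_ends u p : maximal_path o u -> is_path o p ->
  psrc p = psrc u -> ptgt o p = ptgt o u -> maximal_path o p.
Proof.
move=> [pu umax] pp es et; split=> // z pz /[dup] /leJP [a [b [pa pb ea eb ez]]] pz_le.
have u_le : leJ o u (a.1, a.2 ++ u.2 ++ b.2).
  by apply/leJP; exists a, b; rewrite -es -et.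
have pu' : is_path o (a.1, a.2 ++ u.2 ++ b.2).
  apply: (@is_path_cat a (u.1, u.2 ++ b.2)) => //; last by rewrite ea es.
  by apply: is_path_cat; rewrite // -et eb.
have := leJ_size (umax _ pu' u_le); rewrite /= !size_cat => le.
by rewrite (leJ_size_eq pz_le) ?ez /= ?size_cat; [apply: leJ_refl | lia].
Qed.

Lemma maximal_path_leJ_eq u z : maximal_path o u -> is_path o z -> leJ o u z -> z = u.
Proof. by case=> _ umax pz le_uz; apply: leJ_size_eq le_uz (leJ_size (umax _ pz le_uz)). Qed.

Lemma exists_longer_path p : is_path o p -> ~ maximal_path o p ->
  exists z, [/\ is_path o z, leJ o p z & size p.2 < size z.2].
Proof.
move=> pp pnmax; apply: NNPP => nolonger; apply: pnmax; split=> // z pz le_pz.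
have [->|ne] := eqVneq z p; first exact: leJ_refl.
exfalso; apply: nolonger; exists z; split=> //.
by rewrite ltn_neqAle leJ_size // andbT; apply: contra ne => /eqP e; rewrite (leJ_size_eq le_pz) ?e.
Qed.

Definition incident (a y : 'I_n) : bool := (a == y) || (ordS a == y).

Lemma incident_arr_src a : incident a (arr_src o a).
Proof. by rewrite /incident /arr_src; case: (o a); rewrite eqxx ?orbT. Qed.

Lemma incident_arr_tgt a : incident a (arr_tgt o a).
Proof. by rewrite /incident /arr_tgt; case: (o a); rewrite eqxx ?orbT. Qed.

Lemma incident_uniq c d1 d2 y : incident c y -> incident d1 y -> incident d2 y ->
  c != d1 -> c != d2 -> d1 = d2.
Proof.
rewrite /incident !(can2_eq (@ordSK n) (@ord_predK n)).
by do 3!move=> /orP[]/eqP->; rewrite ?eqxx.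
Qed.

End QuiverPaths.

Section AcyclicQuiver.
Variables (n : nat) (o : 'I_n -> bool).
Hypothesis acyclic : ~ has_oriented_cycle o.

(* Pigeonhole: a walk of length >= n visits some vertex twice, closing an oriented cycle. *)
Lemma size_walk_lt x s : is_walk o x s -> size s < n.
Proof.
move=> ws; rewrite ltnNge; apply/negP => le_ns.
set vs := [seq walk_end o x (take i s) | i <- iota 0 (size s).+1].
have /(uniqPn x) [i [j [lt_ij lt_j eij]]] : ~~ uniq vs.
  apply/negP => /(uniq_leq_size)/(_ (fun y _ => mem_enum 'I_n y)).
  by rewrite size_map size_iota size_enum_ord ltnNge le_ns.
move: lt_j eij; rewrite size_map size_iota ltnS => le_js.
have le_is := ltnW (leq_trans lt_ij le_js).
rewrite !(nth_map 0) ?size_iota ?ltnS // !nth_iota ?ltnS // !add0n => eij.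
apply: acyclic; exists (walk_end o x (take i s), drop i (take j s)); split.
- have : is_walk o x (take j s) by move: ws; rewrite -{1}(cat_take_drop j s) is_walk_cat => /andP[].
  by rewrite -{1}(cat_take_drop i (take j s)) is_walk_cat take_takel ?(ltnW lt_ij) // => /andP[].
- by rewrite /= -size_eq0 size_drop size_takel // subn_eq0 -ltnNge.
- by rewrite /ptgt /psrc /= -walk_end_cat -{1}(take_takel s (ltnW lt_ij)) cat_take_drop eij.
Qed.

Lemma path_loop_triv p : is_path o p -> ptgt o p = psrc p -> p = triv (psrc p).
Proof. by case: p => x [|c r] // pp e; case: acyclic; exists (x, c :: r). Qed.

Lemma exists_maximal_path p : is_path o p -> exists2 z, maximal_path o z & leJ o p z.
Proof.
move=> pp; move: {2}(n - size p.2) (leqnn (n - size p.2)) => k.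
elim: k p pp => [|k IH] p pp le_pk.
all: have [pmax|/(exists_longer_path pp)[z [pz le_pz lt_pz]]] := classic (maximal_path o p);
  first by exists p => //; apply: leJ_refl.
all: have lt_zn := size_walk_lt pz.
  by lia.
have [|y ymax le_zy] := IH z pz; first by lia.
by exists y => //; apply: leJ_trans le_zy.
Qed.

Lemma arr_src_neq_tgt c : arr_src o c != arr_tgt o c.
Proof.
apply/eqP => e; apply: acyclic; exists (arr_src o c, [:: c]).
by rewrite /is_path /ptgt /psrc /= eqxx e.
Qed.

Lemma neq_next_arrow c d : arr_src o d = arr_tgt o c -> c != d.
Proof.
by move=> e; apply/eqP => cd; move: e (arr_src_neq_tgt c); rewrite cd => ->; rewrite eqxx.
Qed.

Lemma next_arrow_uniq c d1 d2 :
  arr_src o d1 = arr_tgt o c -> arr_src o d2 = arr_tgt o c -> d1 = d2.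
Proof.
move=> e1 e2; apply: (incident_uniq (incident_arr_tgt o c)).
- by rewrite -e1 incident_arr_src.
- by rewrite -e2 incident_arr_src.
- exact: neq_next_arrow e1.
- exact: neq_next_arrow e2.
Qed.

Lemma prev_arrow_uniq c d1 d2 :
  arr_tgt o d1 = arr_src o c -> arr_tgt o d2 = arr_src o c -> d1 = d2.
Proof.
move=> e1 e2; apply: (incident_uniq (incident_arr_src o c)).
- by rewrite -e1 incident_arr_tgt.
- by rewrite -e2 incident_arr_tgt.
- by rewrite eq_sym; apply: neq_next_arrow; rewrite e1.
- by rewrite eq_sym; apply: neq_next_arrow; rewrite e2.
Qed.

Lemma walk_to_sink_uniq c r1 r2 :
  is_walk o (arr_tgt o c) r1 -> is_walk o (arr_tgt o c) r2 ->
  is_sink o (walk_end o (arr_tgt o c) r1) -> is_sink o (walk_end o (arr_tgt o c) r2) ->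
  r1 = r2.
Proof.
elim: r1 r2 c => [|d1 r1 IH] [|d2 r2] c //=.
- by move=> _ /andP[/eqP e _] /forallP/(_ d2); rewrite e eqxx.
- by move=> /andP[/eqP e _] _ _ /forallP/(_ d1); rewrite e eqxx.
move=> /andP[/eqP e1 w1] /andP[/eqP e2 w2] s1 s2.
have ed : d1 = d2 by apply: (next_arrow_uniq e1 e2).
by subst d2; rewrite (IH r2 d1).
Qed.

Lemma walk_from_source_uniq c x1 x2 l1 l2 :
  is_walk o x1 l1 -> is_walk o x2 l2 ->
  walk_end o x1 l1 = arr_src o c -> walk_end o x2 l2 = arr_src o c ->
  is_source o x1 -> is_source o x2 -> x1 = x2 /\ l1 = l2.
Proof.
elim/last_ind: l1 l2 c => [|l1 e1 IH] l2 c; case/lastP: l2 => [|l2 e2] //=.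
- by move=> _ _ -> ->.
- by rewrite walk_end_rcons => _ _ h1 h2 /forallP/(_ e2); rewrite h2 -h1 eqxx.
- by rewrite walk_end_rcons => _ _ h1 h2 _ /forallP/(_ e1); rewrite h1 -h2 eqxx.
rewrite !is_walk_rcons !walk_end_rcons => /andP[w1 /eqP f1] /andP[w2 /eqP f2] g1 g2 s1 s2.
have ee : e1 = e2 by apply: (prev_arrow_uniq g1 g2).
by subst e2; have [-> ->] := IH l2 e1 w1 w2 (esym f1) (esym f2) s1 s2.
Qed.

Lemma maximal_path_arrow_uniq w w' l1 r1 l2 r2 c :
  maximal_path o w -> maximal_path o w' ->
  w.2 = l1 ++ c :: r1 -> w'.2 = l2 ++ c :: r2 -> w = w'.
Proof.
move=> wmax w'max e1 e2.
have := maximal_path_source wmax; have := maximal_path_source w'max.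
have := maximal_path_sink wmax; have := maximal_path_sink w'max.
case: wmax w'max => + _ [+ _]; case: w e1 => x s /= ->; case: w' e2 => x' s' /= ->.
rewrite /is_path /ptgt /psrc /= !is_walk_cat !walk_end_cat /=.
move=> /and3P[wl1 /eqP a1 wr1] /and3P[wl2 /eqP a2 wr2] t2 t1 s2 s1.
have [-> ->] := walk_from_source_uniq wl1 wl2 (esym a1) (esym a2) s1 s2.
by rewrite (walk_to_sink_uniq wr1 wr2 t1 t2).
Qed.

Lemma maximal_path_endpoint w x : maximal_path o w -> is_endpoint o x w ->
  is_source o x || is_sink o x.
Proof. by move=> wmax [] <-; rewrite ?maximal_path_source ?maximal_path_sink ?orbT. Qed.

Lemma vertex_on_path w x : is_path o w -> leJ o (triv x) w ->
  is_endpoint o x w \/ exists l e d r,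
    [/\ w.2 = rcons l e ++ d :: r, arr_tgt o e = x & arr_src o d = x].
Proof.
move=> pw /leJP[[y a] [[z b] [_ _ /= ea eb ew]]].
move: ea eb pw; rewrite {w}ew /ptgt /psrc /= => <- _.
case/lastP: a => [|l e]; first by left; left.
case: b => [|d r]; first by left; right; rewrite /ptgt /= cats0.
rewrite /is_path /= is_walk_cat /= walk_end_rcons => /and3P[_ /eqP sd _].
by right; exists l, e, d, r.
Qed.

Lemma maximal_path_interior w x e d : maximal_path o w ->
  arr_tgt o e = x -> arr_src o d = x -> ~ is_endpoint o x w.
Proof.
move=> wmax te sd [] ex.
- by move: (maximal_path_source wmax); rewrite ex => /forallP/(_ e); rewrite te eqxx.
- by move: (maximal_path_sink wmax); rewrite ex => /forallP/(_ d); rewrite sd eqxx.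
Qed.

Lemma maximal_paths_meet w w' p : maximal_path o w -> maximal_path o w' -> w <> w' ->
  leJ o p w -> leJ o p w' -> exists x, [/\ p = triv x, is_endpoint o x w & is_endpoint o x w'].
Proof.
move=> wmax w'max neq le_pw le_pw'.
case: p le_pw le_pw' => x [|c r] le_pw le_pw'; last first.
  case/leJP: le_pw => a [b [_ _ _ _ ew]]; case/leJP: le_pw' => a' [b' [_ _ _ _ ew']].
  by case: neq; apply: (maximal_path_arrow_uniq wmax w'max (c := c)); rewrite ?ew ?ew'.
exists x; have [[pw _] [pw' _]] := (wmax, w'max).
have [ex|[l [e [d [r [ew te sd]]]]]] := vertex_on_path pw le_pw;
have [ex'|[l' [e' [d' [r' [ew' te' sd']]]]]] := vertex_on_path pw' le_pw'.
- by [].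
- by case: (maximal_path_interior wmax te' sd' ex).
- by case: (maximal_path_interior w'max te sd ex').
have edd : d = d' by apply: (next_arrow_uniq (c := e)); rewrite ?sd ?sd' te.
by case: neq; rewrite edd in ew; apply: (maximal_path_arrow_uniq wmax w'max ew ew').
Qed.

End AcyclicQuiver.

Import GRing.Theory.
Local Open Scope ring_scope.

Section PathAlgebraFacts.
Variables (n : nat) (o : 'I_n -> bool) (F : fieldType).
Implicit Types (f g : pcode n -> F) (p q u : pcode n).

Definition supported_on (P : pcode n -> Prop) f : Prop := forall p, f p != 0 -> P p.

Lemma scale1f f : scalef 1 f = f.
Proof. by apply: functional_extensionality => p; rewrite /scalef mul1r. Qed.

Lemma scalefK c f : c != 0 -> scalef c^-1 (scalef c f) = f.
Proof. by move=> c_nz; apply: functional_extensionality => p; rewrite /scalef mulKf. Qed.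

Lemma basis_el_neq0 u p : basis_el F u p != 0 -> u = p.
Proof. by rewrite /basis_el; case: (eqVneq u p) => //= _; rewrite eqxx. Qed.

Lemma basis_el_id u : basis_el F u u = 1.
Proof. by rewrite /basis_el eqxx. Qed.

Lemma basis_el_nonzero u : basis_el F u <> zerof F.
Proof. by move/(congr1 (fun f => f u)) => /eqP; rewrite basis_el_id oner_eq0. Qed.

Lemma in_kQ_basis_el u : is_path o u -> in_kQ o (basis_el F u).
Proof. by move=> pu p /basis_el_neq0 <-. Qed.

Lemma mulf_triv_l x f : mulf o (basis_el F (triv x)) f = fun p => (x == psrc p)%:R * f p.
Proof.
apply: functional_extensionality => -[y s]; rewrite /mulf big_ord_recl /= take0 drop0.
rewrite big1 ?addr0 => [|i _]; first by rewrite /basis_el /triv xpair_eqE eqxx andbT.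
by rewrite /basis_el /triv xpair_eqE [[::] == _]eq_sym -size_eq0 size_takel ?andbF ?mul0r.
Qed.

Lemma mulf_triv_r y f : mulf o f (basis_el F (triv y)) = fun p => f p * (y == ptgt o p)%:R.
Proof.
apply: functional_extensionality => -[x s]; rewrite /mulf big_ord_recr /= take_size drop_size.
rewrite big1 ?add0r => [|i _]; first by rewrite /basis_el /triv xpair_eqE eqxx andbT.
rewrite /basis_el /triv xpair_eqE [[::] == _]eq_sym -size_eq0 size_drop subn_eq0.
by rewrite leqNgt ltn_ord andbF mulr0.
Qed.

Lemma mulf_basis_el_l a q f : psrc q = ptgt o a ->
  mulf o (basis_el F a) f (a.1, a.2 ++ q.2) = f q.
Proof.
move=> qa; rewrite /mulf /=.
have lt_a : (size a.2 < (size (a.2 ++ q.2)).+1)%N by rewrite size_cat ltnS leq_addr.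
rewrite (bigD1 (Ordinal lt_a)) //= big1 ?addr0 => [|i ne].
  rewrite take_size_cat // drop_size_cat // -surjective_pairing basis_el_id mul1r.
  by rewrite -/(ptgt o a) -qa; case: q {qa lt_a}.
rewrite /basis_el; have [ea|_] := eqVneq a (a.1, take i (a.2 ++ q.2)); last by rewrite mul0r.
move/(congr1 (fun p => size p.2)): ea; rewrite /= size_takel => [ei|]; last exact: ltn_ord i.
by move: ne; rewrite -val_eqE /= -ei eqxx.
Qed.

Lemma mulf_basis_el_r b q f : ptgt o q = psrc b ->
  mulf o f (basis_el F b) (q.1, q.2 ++ b.2) = f q.
Proof.
move=> qb; rewrite /mulf /=.
have lt_q : (size q.2 < (size (q.2 ++ b.2)).+1)%N by rewrite size_cat ltnS leq_addr.
rewrite (bigD1 (Ordinal lt_q)) //= big1 ?addr0 => [|i ne].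
  rewrite take_size_cat // drop_size_cat // -/(ptgt o q) qb.
  by case: b {qb lt_q} => y r; rewrite basis_el_id mulr1; case: q.
rewrite /basis_el.
have [eb|_] := eqVneq b (walk_end o q.1 (take i (q.2 ++ b.2)), drop i (q.2 ++ b.2));
  last by rewrite mulr0.
move/(congr1 (fun p => size p.2)): eb; rewrite /= size_drop.
move: ne (ltn_ord i); rewrite -val_eqE /=; move: (nat_of_ord i) => m.
by rewrite size_cat => ne lt_m em; exfalso; lia.
Qed.

Lemma mulf_neq0 g f p : mulf o g f p != 0 ->
  exists i : 'I_(size p.2).+1, g (p.1, take i p.2) != 0 /\
     f (walk_end o p.1 (take i p.2), drop i p.2) != 0.
Proof.
move=> nz; apply: NNPP => none; move: nz; rewrite /mulf big1 ?eqxx // => i _.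
have [->|g_nz] := eqVneq (g (p.1, take i p.2)) 0; first by rewrite mul0r.
have [->|f_nz] := eqVneq (f (walk_end o p.1 (take i p.2), drop i p.2)) 0; first by rewrite mulr0.
by case: none; exists i.
Qed.

Lemma mulf_basis_el_neq0 a b f p :
  mulf o (basis_el F a) (mulf o f (basis_el F b)) p != 0 ->
  exists q, [/\ f q != 0, psrc q = ptgt o a, ptgt o q = psrc b
               & p = (a.1, a.2 ++ q.2 ++ b.2)].
Proof.
case/mulf_neq0 => i [/basis_el_neq0 -> /mulf_neq0 [j [f_nz /basis_el_neq0 ->]]].
exists (walk_end o p.1 (take i p.2), take j (drop i p.2)); split=> //.
by rewrite /= !cat_take_drop -surjective_pairing.
Qed.

End PathAlgebraFacts.

Section SupportedIdeals.
Variables (n : nat) (o : 'I_n -> bool) (F : fieldType).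
Implicit Types (f g : pcode n -> F) (p q u : pcode n) (P : pcode n -> Prop).

Lemma supported_on_ideal P : (forall p, P p -> is_path o p) -> upward_closed o P ->
  is_ideal o (supported_on (F := F) P).
Proof.
move=> Ppath Pup; split.
- by move=> f fP p /fP /Ppath.
- by move=> p; rewrite eqxx.
- move=> f g fP gP p; rewrite /addf.
  by have [f0|/fP //] := eqVneq (f p) 0; rewrite f0 add0r => /gP.
- by move=> c f fP p; rewrite /scalef mulf_eq0 negb_or => /andP[_ /fP].
move=> f g fP gkQ; split=> p /mulf_neq0 [i [g_nz f_nz]].
- apply: Pup (fP _ f_nz) _; apply/leJP.
  exists (p.1, take i p.2), (triv (ptgt o p)); split=> //; first exact: gkQ.
  + by rewrite /ptgt /= -walk_end_cat cat_take_drop.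
  + by rewrite /= cats0 cat_take_drop -surjective_pairing.
- apply: Pup (fP _ g_nz) _; apply/leJP.
  exists (triv p.1), (walk_end o p.1 (take i p.2), drop i p.2); split=> //; first exact: gkQ.
  by rewrite /= cat_take_drop -surjective_pairing.
Qed.

Lemma supported_on_decomposable I P1 P2 u1 u2 :
  (forall p, P1 p -> is_path o p) -> (forall p, P2 p -> is_path o p) ->
  upward_closed o P1 -> upward_closed o P2 -> (forall p, P1 p -> ~ P2 p) ->
  P1 u1 -> P2 u2 -> (forall f, I f <-> supported_on (fun p => P1 p \/ P2 p) f) ->
  ideal_decomposable o I.
Proof.
move=> P1path P2path P1up P2up P12 P1u1 P2u2 IP.
exists (supported_on (F := F) P1), (supported_on (F := F) P2); split.
- by split; apply: supported_on_ideal.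
- by exists (basis_el F u1); split; [move=> p /basis_el_neq0 <- | apply: basis_el_nonzero].
- by exists (basis_el F u2); split; [move=> p /basis_el_neq0 <- | apply: basis_el_nonzero].
- move=> f; rewrite IP; split=> [fP|[j [k [jP [kP ->]]]] p].
    pose on1 p := if excluded_middle_informative (P1 p) then f p else 0.
    exists on1, (addf f (scalef (-1) on1)).
    split; [|split].
    + by move=> p; rewrite /on1; destruct excluded_middle_informative; rewrite ?eqxx.
    + move=> p; rewrite /addf /scalef /on1; destruct excluded_middle_informative.
        by rewrite mulN1r subrr eqxx.
      by rewrite mulr0 addr0 => /fP [].
    + by apply: functional_extensionality => p; rewrite /addf /scalef mulN1r addrC subrK.
  rewrite /addf; have [j0|/jP] := eqVneq (j p) 0; last by left.
  by rewrite j0 add0r => /kP; right.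
- move=> f fP1 fP2; apply: functional_extensionality => p; apply/eqP.
  by apply: contraT => /[dup] /fP1 /P12 nP2 /fP2.
Qed.

Section Ideal.
Variable L : (pcode n -> F) -> Prop.
Hypothesis L_ideal : is_ideal o L.

Lemma ideal_in_kQ f : L f -> in_kQ o f. Proof. by case: L_ideal => + _ _ _ _; apply. Qed.
Lemma ideal0 : L (zerof F). Proof. by case: L_ideal. Qed.
Lemma idealD f g : L f -> L g -> L (addf f g). Proof. by case: L_ideal => _ _ + _ _; apply. Qed.
Lemma idealZ c f : L f -> L (scalef c f). Proof. by case: L_ideal => _ _ _ + _; apply. Qed.

Lemma ideal_mull f g : L f -> in_kQ o g -> L (mulf o g f).
Proof. by case: L_ideal => _ _ _ _ Lmul /Lmul /[apply] -[]. Qed.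

Lemma ideal_mulr f g : L f -> in_kQ o g -> L (mulf o f g).
Proof. by case: L_ideal => _ _ _ _ Lmul /Lmul /[apply] -[]. Qed.

Lemma ideal_sum (s : seq (pcode n)) (c : pcode n -> F) :
  (forall p, p \in s -> L (basis_el F p)) ->
  L (fun q => \sum_(p <- s) c p * basis_el F p q).
Proof.
elim: s => [|a s IH] Ls.
  rewrite [X in L X](_ : _ = zerof F); first exact: ideal0.
  by apply: functional_extensionality => q; rewrite big_nil.
rewrite [X in L X](_ : _ = addf (scalef (c a) (basis_el F a))
                                 (fun q => \sum_(p <- s) c p * basis_el F p q)).
  apply: idealD; first by apply/idealZ/Ls; rewrite mem_head.
  by apply: IH => p ps; apply: Ls; rewrite inE ps orbT.
by apply: functional_extensionality => q; rewrite big_cons.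
Qed.

Lemma ideal_basis_el_endpoint x u : L (basis_el F (triv x)) -> is_path o u ->
  is_endpoint o x u -> L (basis_el F u).
Proof.
move=> Lx pu [] ex.
- rewrite [X in L X](_ : _ = mulf o (basis_el F (triv x)) (basis_el F u)).
    by apply: ideal_mulr => //; apply: in_kQ_basis_el.
  rewrite mulf_triv_l; apply: functional_extensionality => p; rewrite /basis_el.
  by case: (eqVneq u p) => [<-|]; rewrite ?mulr0 // ex eqxx mul1r.
- rewrite [X in L X](_ : _ = mulf o (basis_el F u) (basis_el F (triv x))).
    by apply: ideal_mull => //; apply: in_kQ_basis_el.
  rewrite mulf_triv_r; apply: functional_extensionality => p; rewrite /basis_el.
  by case: (eqVneq u p) => [<-|]; rewrite ?mul0r // ex eqxx mulr1.
Qed.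

Lemma ideal_corner_basis_el u f : L f ->
  (forall p, f p != 0 -> psrc p = psrc u -> ptgt o p = ptgt o u -> p = u) ->
  L (scalef (f u) (basis_el F u)).
Proof.
move=> Lf u_uniq.
rewrite [X in L X](_ : _ = mulf o (mulf o (basis_el F (triv (psrc u))) f)
                                        (basis_el F (triv (ptgt o u)))).
  by apply: ideal_mulr (ideal_mull Lf (in_kQ_basis_el _)) (in_kQ_basis_el _).
rewrite mulf_triv_r mulf_triv_l; apply: functional_extensionality => p; rewrite /scalef /basis_el.
have [<-|ne] := eqVneq u p; first by rewrite !eqxx mulr1 mul1r mulr1.
have [->|f_nz] := eqVneq (f p) 0; first by rewrite !(mulr0, mul0r).
have [es|] := eqVneq (psrc u) (psrc p); last by rewrite !(mulr0, mul0r).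
have [et|] := eqVneq (ptgt o u) (ptgt o p); last by rewrite !(mulr0, mul0r).
by case/eqP: ne; rewrite (u_uniq p).
Qed.

End Ideal.
End SupportedIdeals.

Section FiniteSupport.
Variables (n : nat) (o : 'I_n -> bool) (F : fieldType).
Hypothesis acyclic : ~ has_oriented_cycle o.
Implicit Types (f : pcode n -> F) (p q : pcode n).

Definition path_codes : seq (pcode n) :=
  [seq (x, val s) | x <- enum 'I_n, s <- enum {bseq n of 'I_n}].

Lemma mem_path_codes p : is_path o p -> p \in path_codes.
Proof.
move=> pp; have s_le : (size p.2 <= n)%N by apply/ltnW/(size_walk_lt acyclic pp).
rewrite [p]surjective_pairing; apply: (allpairs_f _ (x := p.1) (y := Bseq s_le));
  by rewrite mem_enum.
Qed.

Definition support f : seq (pcode n) := [seq p <- undup path_codes | f p != 0].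

Lemma sum_basis_el_neq0 (s : seq (pcode n)) (c : pcode n -> F) q :
  \sum_(p <- s) c p * basis_el F p q != 0 -> q \in s.
Proof.
apply: contraR => q_s; rewrite big_seq big1 // => p ps.
by rewrite /basis_el; case: eqVneq ps => [->|]; rewrite ?(negbTE q_s) ?mulr0.
Qed.

Lemma sum_basis_el_uniq (s : seq (pcode n)) (c : pcode n -> F) q : uniq s ->
  \sum_(p <- s) c p * basis_el F p q = if q \in s then c q else 0.
Proof.
elim: s => [|a s IH] /=; first by rewrite big_nil.
case/andP => a_s s_uniq; rewrite big_cons IH // inE /basis_el.
by case: (eqVneq a q) => [<-|] /=; rewrite ?(negbTE a_s) ?mulr1 ?addr0 ?mulr0 ?add0r.
Qed.

Lemma basis_expansion f : in_kQ o f ->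
  f = fun q => \sum_(p <- support f) f p * basis_el F p q.
Proof.
move=> fkQ; apply: functional_extensionality => q.
rewrite sum_basis_el_uniq ?filter_uniq ?undup_uniq // mem_filter mem_undup.
by have [->|/[dup] /fkQ /mem_path_codes ->] := eqVneq (f q) 0.
Qed.

Lemma in_spanP (X : pcode n -> Prop) f : (forall p, X p -> is_path o p) ->
  in_span X f <-> supported_on X f.
Proof.
move=> Xpath; split=> [[s [c [sX ->]]] q /sum_basis_el_neq0 /sX //|fX].
exists (support f), f; split; last by apply: basis_expansion => p /fX /Xpath.
by move=> p; rewrite mem_filter => /andP[/fX].
Qed.

Lemma ideal_supported L f : is_ideal o L -> in_kQ o f ->
  (forall p, f p != 0 -> L (basis_el F p)) -> L f.
Proof.
move=> L_ideal fkQ fL; rewrite (basis_expansion fkQ); apply: (ideal_sum L_ideal) => p.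
by rewrite mem_filter => /andP[/fL].
Qed.

Lemma lin_sg_idealP I : lin_sg_ideal o I ->
  exists X : pcode n -> Prop, [/\ forall p, X p -> is_path o p, upward_closed o X
                              & forall f, I f <-> supported_on X f].
Proof.
case=> X [Xpath Xclosed IX]; exists X; split=> // [p z Xp /leJP|f].
- case=> a [b [pa pb ea eb ->]]; apply: (Xclosed p a b (a.1, a.2 ++ p.2)) => //.
  + exact/pcatP.
  + by apply/pcatP; rewrite ptgt_cat //= catA.
- by rewrite IX in_spanP.
Qed.

End FiniteSupport.

Section GammaGraph.
Variables (n : nat) (o : 'I_n -> bool) (F : fieldType).
Hypothesis acyclic : ~ has_oriented_cycle o.
Variables (I : (pcode n -> F) -> Prop) (X : pcode n -> Prop).
Hypotheses (Xpath : forall p, X p -> is_path o p) (Xup : upward_closed o X).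
Hypothesis IX : forall f, I f <-> supported_on X f.

Lemma I_basis_el u : I (basis_el F u) <-> X u.
Proof.
rewrite IX; split=> [|Xu p /basis_el_neq0 <- //].
by apply; rewrite basis_el_id oner_eq0.
Qed.

Lemma gamma_vertex_above p : X p -> exists2 z, gamma_vertex o I z & leJ o p z.
Proof.
move=> Xp; have [z zmax le_pz] := exists_maximal_path acyclic (Xpath Xp).
by exists z => //; split=> //; apply/I_basis_el/(Xup Xp).
Qed.

Lemma gamma_conn_rcons u v w :
  gamma_conn o I u v -> gamma_adj o I v w -> gamma_conn o I u w.
Proof.
elim=> [x|x y z xy _ IH] adj; last exact: gc_step xy (IH adj).
by apply: gc_step adj _; apply: gc_refl.
Qed.

Lemma gamma_connP u w : gamma_conn o I u w -> u = w \/ exists v, gamma_adj o I u v.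
Proof. by case=> [x|x y z xy _]; [left|right; exists y]. Qed.

Section Disconnected.
Variable u : pcode n.

Definition below_component p :=
  exists w, [/\ gamma_vertex o I w, gamma_conn o I u w & leJ o p w].

(* Two vertices above a common path of X share an edge, so they lie in the same component. *)
Lemma below_component_up p z : X p -> below_component p -> leJ o p z -> below_component z.
Proof.
move=> Xp [w [[wmax Iw] uw le_pw]] le_pz.
have [w' [w'max Iw'] le_zw'] := gamma_vertex_above (Xup Xp le_pz).
exists w'; split=> //; have [<-|neq] := classic (w = w'); first by [].
have [x [ex xw xw']] := maximal_paths_meet acyclic wmax w'max neq le_pw (leJ_trans le_pz le_zw').
apply: (gamma_conn_rcons uw); split=> //; exists x; split=> //.
- exact: maximal_path_endpoint wmax xw.
- by apply/I_basis_el; rewrite -ex.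
Qed.

Lemma disconnected_decomposable v : gamma_vertex o I u -> gamma_vertex o I v ->
  ~ gamma_conn o I u v -> ideal_decomposable o I.
Proof.
move=> [umax Iu] [vmax Iv] not_uv.
apply: (@supported_on_decomposable _ _ _ _ (fun p => X p /\ below_component p)
          (fun p => X p /\ ~ below_component p) u v).
- by move=> p [/Xpath].
- by move=> p [/Xpath].
- by move=> p z [Xp bp] le_pz; split; [apply: Xup le_pz | apply: below_component_up le_pz].
- move=> p z [Xp nbp] le_pz; split; first exact: Xup le_pz.
  by case=> w [vw uw le_zw]; apply: nbp; exists w; split=> //; apply: leJ_trans le_zw.
- by move=> p [_ ?] [].
- split; first exact/I_basis_el.
  by exists u; split=> //; [apply: gc_refl | apply: leJ_refl].
- split; first exact/I_basis_el.
  case=> w [[wmax Iw] uw le_vw]; apply: not_uv.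
  by rewrite -(maximal_path_leJ_eq vmax (Xpath (proj1 (I_basis_el w) Iw)) le_vw).
move=> f; rewrite IX; split=> fX p /fX; last by case=> -[].
by have [|] := classic (below_component p); [left|right].
Qed.

End Disconnected.

Section Summands.
Variables J K : (pcode n -> F) -> Prop.
Hypotheses (J_ideal : is_ideal o J) (K_ideal : is_ideal o K).
Hypothesis IJK : forall f, I f <-> exists j k, J j /\ K k /\ f = addf j k.
Hypothesis JK0 : forall f, J f -> K f -> f = zerof F.

Lemma summand_supported f : J f \/ K f -> supported_on X f.
Proof.
move=> JKf; apply/IX/IJK; case: JKf => [Jf|Kf].
  exists f, (zerof F); split=> //; split; first exact: ideal0 K_ideal.
  by apply: functional_extensionality => p; rewrite /addf addr0.
exists (zerof F), f; split; first exact: ideal0 J_ideal.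
by split=> //; apply: functional_extensionality => p; rewrite /addf add0r.
Qed.

Lemma basis_el_summand u : X u ->
  (forall p, X p -> psrc p = psrc u -> ptgt o p = ptgt o u -> p = u) ->
  J (basis_el F u) \/ K (basis_el F u).
Proof.
move=> Xu u_uniq; have [j [k [Jj [Kk e_u]]]] := proj1 (IJK _) (proj2 (I_basis_el u) Xu).
have jk_u : j u + k u = 1 by move/(congr1 (fun f => f u)): e_u; rewrite basis_el_id.
have Jju : J (scalef (j u) (basis_el F u)).
  apply: (ideal_corner_basis_el J_ideal Jj) => p.
  by move/(summand_supported (or_introl Jj)); apply: u_uniq.
have Kku : K (scalef (k u) (basis_el F u)).
  apply: (ideal_corner_basis_el K_ideal Kk) => p.
  by move/(summand_supported (or_intror Kk)); apply: u_uniq.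
have [j0|j_nz] := eqVneq (j u) 0.
  by right; move: Kku; rewrite -[k u]add0r -j0 jk_u scale1f.
by left; rewrite -(scalefK (basis_el F u) j_nz); apply: idealZ J_ideal _ _ Jju.
Qed.

Lemma triv_summand x : X (triv x) ->
  J (basis_el F (triv x)) \/ K (basis_el F (triv x)).
Proof.
move=> Xx; apply: basis_el_summand => // p /Xpath pp es et.
by rewrite (path_loop_triv acyclic pp) es // et.
Qed.

(* An edge eps_x of Gamma_I lies in J or in K and absorbs both maximal paths it joins. *)
Lemma summand_gamma_conn u w :
  gamma_conn o I u w -> J (basis_el F u) -> J (basis_el F w).
Proof.
elim=> [//|x y z [[[px _] _] [[py _] _] _ [t [_ It tx ty]]] _ IH] Jx; apply: IH.
have [Jt|Kt] := triv_summand (proj1 (I_basis_el _) It).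
  exact: (ideal_basis_el_endpoint J_ideal Jt py ty).
by case/basis_el_nonzero: (JK0 Jx (ideal_basis_el_endpoint K_ideal Kt px tx)).
Qed.

Lemma connected_summand_eq0 z f : gamma_connected o I -> gamma_vertex o I z ->
  J (basis_el F z) -> K f -> f = zerof F.
Proof.
move=> conn vz Jz Kf; apply: functional_extensionality => w; apply/eqP/contraT => fw.
have Xf := summand_supported (or_intror Kf).
have [u [umax _] /leJP[a [b [pa pb ea eb eu]]]] := gamma_vertex_above (Xf _ fw).
pose g := mulf o (basis_el F a) (mulf o f (basis_el F b)).
have Kg : K g.
  apply: (ideal_mull K_ideal _ (in_kQ_basis_el (F := F) pa)).
  exact: (ideal_mulr K_ideal Kf (in_kQ_basis_el (F := F) pb)).
have gu : g u = f w.
  rewrite /g eu -[w.2 ++ b.2]/((w.1, w.2 ++ b.2).2) mulf_basis_el_l ?ea //.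
  exact: mulf_basis_el_r.
have Jg : J g.
  apply: (ideal_supported acyclic J_ideal (ideal_in_kQ K_ideal Kg)).
  move=> p /mulf_basis_el_neq0 [q [fq qa qb ->]].
  have le_qp : leJ o q (a.1, a.2 ++ q.2 ++ b.2) by apply/leJP; exists a, b.
  have Xp := Xup (Xf _ fq) le_qp.
  apply: (summand_gamma_conn (conn _ _ vz _) Jz); split; last exact/I_basis_el.
  by apply: (maximal_path_same_ends umax (Xpath Xp)); rewrite eu // !ptgt_cat3.
by move: fw; rewrite -gu (JK0 Jg Kg) eqxx.
Qed.

Lemma gamma_vertex_summand z : gamma_connected o I -> gamma_vertex o I z ->
  J (basis_el F z) \/ K (basis_el F z).
Proof.
move=> conn [zmax Iz]; have Xz := proj1 (I_basis_el z) Iz.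
have [[x [xz Xx]]|no_edge] := classic (exists x, is_endpoint o x z /\ X (triv x)).
  have [Jx|Kx] := triv_summand Xx; [left|right].
  - exact: (ideal_basis_el_endpoint J_ideal Jx (proj1 zmax) xz).
  - exact: (ideal_basis_el_endpoint K_ideal Kx (proj1 zmax) xz).
apply: basis_el_summand Xz _ => p Xp es et; apply: NNPP => neq_pz.
have vp : gamma_vertex o I p.
  by split; [apply: maximal_path_same_ends zmax (Xpath Xp) es et | apply/I_basis_el].
case: (gamma_connP (conn _ _ (conj zmax Iz) vp)) => [/esym //|[v [_ _ _ [x [_ Ix xz _]]]]].
by apply: no_edge; exists x; split=> //; apply/I_basis_el.
Qed.

End Summands.

Lemma gamma_vertex_exists : nonzero_set I -> exists z, gamma_vertex o I z.
Proof.
case=> f [/IX fX f_nz]; have [p fp] : exists p, f p != 0.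
  apply: NNPP => none; apply: f_nz; apply: functional_extensionality => p.
  by apply/eqP/contraT => fp; case: none; exists p.
by have [z vz _] := gamma_vertex_above (fX _ fp); exists z.
Qed.

Lemma gamma_connected_indecomposable :
  gamma_connected o I -> nonzero_set I -> ideal_indecomposable o I.
Proof.
move=> conn /gamma_vertex_exists [z vz] [J [K [[J_ideal K_ideal] [j [Jj j0]] [k [Kk k0]] IJK JK0]]].
have IKJ f : I f <-> exists k j, K k /\ J j /\ f = addf k j.
  rewrite IJK; split=> -[g [h [? [? ->]]]]; exists h, g; do 2!split=> //;
    by apply: functional_extensionality => p; rewrite /addf addrC.
have KJ0 f : K f -> J f -> f = zerof F by move=> Kf Jf; apply: JK0.
have [Jz|Kz] := gamma_vertex_summand J_ideal K_ideal IJK conn vz.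
- exact: k0 (connected_summand_eq0 J_ideal K_ideal IJK JK0 conn vz Jz Kk).
- exact: j0 (connected_summand_eq0 K_ideal J_ideal IKJ KJ0 conn vz Kz Jj).
Qed.

End GammaGraph.

Theorem theorem9 (F : closedFieldType) (n : nat) (o : 'I_n -> bool)
  (I : (pcode n -> F) -> Prop) :
  admissible o ->
  lin_sg_ideal o I ->
  nonzero_set I ->
  ideal_indecomposable o I <-> gamma_connected o I.
Proof.
move=> [acyclic _] /(lin_sg_idealP acyclic) [X [Xpath Xup IX]] I_nz; split.
- move=> indec u v vu vv; apply: NNPP => not_uv; apply: indec.
  exact: (disconnected_decomposable acyclic Xpath Xup IX vu vv not_uv).
- by move=> conn; apply: (gamma_connected_indecomposable acyclic Xpath Xup IX conn I_nz).
Qed.
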